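(* Let $1\le t_i\le t_o$ be integers and $q$ a prime power, and let $S(t_i,t_o,q)=\max\{s:\text{a linear }(t_i,t_o,s,q)\text{-AONT exists}\}$. Then there exists a $(t_i,t_o,s,q)$-AONT for every $s$ with $t_o\le s\le S(t_i,t_o,q)$.
   Context: A $(t_i,t_o,s,q)$-AONT is a $q^s\times 2s$ array over an alphabet of size $q$ (columns labelled $1,\dots,2s$) that is unbiased with respect to $\{1,\dots,s\}$, $\{s+1,\dots,2s\}$, and $I\cup J$ for every $I\subseteq\{1,\dots,s\}$ with $|I|=t_i$ and every $J\subseteq\{s+1,\dots,2s\}$ with $|J|=s-t_o$; here an $N\times k$ array is unbiased with respect to a set $D$ of columns if the rows restricted to $D$ contain every $|D|$-tuple over the alphabet exactly $N/q^{|D|}$ times. A linear $(t_i,t_o,s,q)$-AONT is the array with rows $(\mathbf{x},\mathbf{x}M^{-1})$, $\mathbf{x}\in\mathbb{F}_q^s$, for an invertible $s\times s$ matrix $M$ over $\mathbb{F}_q$, which is a $(t_i,t_o,s,q)$-AONT; equivalently $M$ is invertible and every $t_o\times t_i$ submatrix of $M$ has rank $t_i$. *)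

From HB Require Import structures.
From mathcomp Require Import all_boot all_order all_algebra all_field.
Set Implicit Arguments. Unset Strict Implicit. Unset Printing Implicit Defensive.
Import GRing.Theory.
Local Open Scope ring_scope.

(* unbiased with respect to the column set D: every |D|-tuple over X
   (given as the restriction to D of some f : 'I_k -> X) appears in
   the rows restricted to D exactly N / q^|D| times, N = #|R|. *)
Definition unbiased (R X : finType) (k : nat) (A : R -> 'I_k -> X)
    (D : {set 'I_k}) : Prop :=
  forall f : {ffun 'I_k -> X},
    #|[set r : R | [forall j in D, A r j == f j]]| = (#|R| %/ #|X| ^ #|D|)%N.

(* (ti,to,s,q)-AONT: a q^s x 2s array (columns 0..2s-1 here, i.e. the
   paper's columns 1..2s shifted by one) over an alphabet of size q. *)
Definition aont (R X : finType) (ti to s : nat) (A : R -> 'I_(s + s) -> X)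
    : Prop :=
  let first := [set j : 'I_(s + s) | (j < s)%N] in
  let second := [set j : 'I_(s + s) | (s <= j)%N] in
  [/\ #|R| = (#|X| ^ s)%N,
      unbiased A first,
      unbiased A second &
      forall I J : {set 'I_(s + s)},
        I \subset first -> #|I| = ti ->
        J \subset second -> #|J| = (s - to)%N ->
        unbiased A (I :|: J)].

Definition linear_array (F : finFieldType) (s : nat) (M : 'M[F]_s)
    (x : 'rV[F]_s) (j : 'I_(s + s)) : F :=
  match split j with
  | inl a => x 0 a
  | inr b => (x *m invmx M) 0 b
  end.

Definition linear_aont (F : finFieldType) (ti to s : nat) (M : 'M[F]_s)
    : Prop :=
  M \in unitmx /\ aont ti to (linear_array M).

From HB Require Import structures.
From mathcomp Require Import all_boot all_order all_algebra all_field zify.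
Set Implicit Arguments. Unset Strict Implicit. Unset Printing Implicit Defensive.
Import GRing.Theory.
Local Open Scope ring_scope.

(* Let M be the matrix of a linear AONT of size n >= s.  Choose s rows of M
   (indexed by t) and s columns (indexed by p) forming an invertible s x s
   submatrix N.  The rows (x, x N^-1) of the array of N are restrictions of
   the rows (x', x' M^-1) of the array of M for which x' M^-1 vanishes outside
   the image of t.  So a pattern on t_i first-half and s - t_o second-half
   columns of the array of N lifts to a pattern on t_i first-half and
   (s - t_o) + (n - s) = n - t_o second-half columns of the array of M (zeros
   on the padding columns), which some row of that array realises.  For a
   linear array, realisability of every pattern on a set of columns already
   gives unbiasedness, since all fibres of a linear map are translates of one
   another. *)

Lemma card_uniform_fibers (T U : finType) (g : T -> U) (P : {pred U}) c :
  (forall x, g x \in P) -> (forall u, u \in P -> #|[set x | g x == u]| = c) ->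
  #|T| = (#|P| * c)%N.
Proof.
move=> gP fibP; rewrite -[LHS]sum1_card.
rewrite (partition_big g (fun u => u \in P)) //= -sum_nat_const.
by apply: eq_bigr => u Pu; rewrite sum1dep_card fibP.
Qed.

Lemma mulmx_colsub_rowsub (R : pzRingType) m n k (t : 'I_m -> 'I_n)
    (y : 'rV[R]_n) (B : 'M[R]_(n, k)) :
  injective t -> (forall c, c \notin codom t -> y 0 c = 0) ->
  colsub t y *m rowsub t B = y *m B.
Proof.
move=> inj_t y0; apply/rowP => i; rewrite !mxE (bigID (mem (codom t))) /=.
rewrite [X in _ = _ + X]big1 ?addr0 => [|c /y0 ->]; last by rewrite mul0r.
rewrite -big_uniq ?(map_inj_uniq inj_t) ?enum_uniq //= big_image.
by apply: eq_bigr => a _; rewrite !mxE.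
Qed.

Section Unbiased.
Variables (X : finType) (k : nat).
Implicit Type D : {set 'I_k}.

Lemma unbiased_reindex (R R' : finType) (A : R -> 'I_k -> X) (e : R' -> R) D :
  bijective e -> unbiased A D -> unbiased (fun r => A (e r)) D.
Proof.
move=> bij_e uA f; rewrite (bij_eq_card bij_e) -(uA f).
rewrite -(on_card_preimset (onW_bij _ bij_e)).
by apply: eq_card => r; rewrite !inE.
Qed.

Lemma unbiased_exists_row (R : finType) (A : R -> 'I_k -> X) D :
  (0 < #|X|)%N -> (#|X| ^ #|D| <= #|R|)%N -> unbiased A D ->
  forall f : {ffun 'I_k -> X}, exists r, forall j, j \in D -> A r j = f j.
Proof.
move=> X_gt0 le_XD_R uA f.
have : (0 < #|[set r | [forall j in D, A r j == f j]]|)%N.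
  by rewrite uA divn_gt0 ?expn_gt0 ?X_gt0.
by case/card_gt0P => r; rewrite inE => /forall_inP Ar; exists r => j /Ar/eqP.
Qed.

End Unbiased.

Lemma aont_reindex (R R' X : finType) ti to s (A : R -> 'I_(s + s) -> X)
    (e : R' -> R) :
  bijective e -> aont ti to A -> aont ti to (fun r => A (e r)).
Proof.
move=> bij_e [cardR u1 u2 uIJ]; split; first by rewrite (bij_eq_card bij_e).
- exact: unbiased_reindex.
- exact: unbiased_reindex.
by move=> I J *; apply: unbiased_reindex; auto.
Qed.

Lemma unbiased_additive (R X : finZmodType) k (A : R -> 'I_k -> X)
    (D : {set 'I_k}) :
  (forall j, {morph A^~ j : x y / x - y}) ->
  (forall f : {ffun 'I_k -> X}, exists r, forall j, j \in D -> A r j = f j) ->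
  unbiased A D.
Proof.
move=> A_sub onto.
pose fiber (f : {ffun 'I_k -> X}) := [set r | [forall j in D, A r j == f j]].
have fiberE f : #|fiber f| = #|fiber [ffun=> 0]|.
  have [r0 r0f] := onto f.
  rewrite -[RHS](card_preimset _ (addIr (- r0))); apply: eq_card => r.
  rewrite !inE; apply: eq_forallb_in => j jD.
  by rewrite ffunE A_sub r0f // subr_eq0.
pose restr r : {ffun 'I_k -> X} := [ffun j => if j \in D then A r j else 0].
have restr_on r : restr r \in pffun_on 0 D predT.
  apply/pffun_onP; split=> // ; apply/subsetP => j.
  by rewrite !inE ffunE; case: (j \in D); rewrite ?eqxx.
have restr_fiber f : f \in pffun_on 0 D predT ->
    #|[set r | restr r == f]| = #|fiber [ffun=> 0]|.
  case/pffun_onP => /subsetP supp_f _.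
  rewrite -(fiberE f); apply: eq_card => r; rewrite !inE.
  apply/eqP/forall_inP => [<- j jD | Af]; first by rewrite ffunE jD.
  apply/ffunP => j; rewrite ffunE; case: ifPn => [/Af/eqP // | jD].
  by apply/esym/eqP; apply: contraNT jD => /supp_f.
have cardR := card_uniform_fibers restr_on restr_fiber.
move=> f; rewrite -/(fiber f) fiberE cardR card_pffun_on mulKn //.
by rewrite expn_gt0; apply/orP; left; apply/card_gt0P; exists 0.
Qed.

Section LinearArray.
Variables (F : finFieldType) (s : nat) (M : 'M[F]_s).

Lemma linear_array_lshift x a : linear_array M x (lshift s a) = x 0 a.
Proof. by rewrite /linear_array (unsplitK (inl _ a)). Qed.

Lemma linear_array_rshift x b :
  linear_array M x (rshift s b) = (x *m invmx M) 0 b.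
Proof. by rewrite /linear_array (unsplitK (inr _ b)). Qed.

Lemma linear_arrayB j : {morph linear_array M ^~ j : x y / x - y}.
Proof.
move=> x y; case: (split_ordP j) => [a|b] ->.
  by rewrite !linear_array_lshift !mxE.
by rewrite !linear_array_rshift mulmxBl !mxE.
Qed.

Lemma linear_array_unbiased_first :
  unbiased (linear_array M) [set j : 'I_(s + s) | (j < s)%N].
Proof.
apply: unbiased_additive linear_arrayB _ => f.
exists (\row_a f (lshift s a)) => j; rewrite inE.
by case: (split_ordP j) => [a|b] -> //=; rewrite linear_array_lshift mxE.
Qed.

Lemma linear_array_unbiased_second :
  M \in unitmx -> unbiased (linear_array M) [set j : 'I_(s + s) | (s <= j)%N].
Proof.
move=> M_unit; apply: unbiased_additive linear_arrayB _ => f.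
exists ((\row_b f (rshift s b)) *m M) => j; rewrite inE.
case: (split_ordP j) => [a|b] -> /=; first by rewrite leqNgt ltn_ord.
by rewrite linear_array_rshift mulmxK // mxE.
Qed.

End LinearArray.

Definition block_embed m n (p t : 'I_m -> 'I_n) (j : 'I_(m + m)) : 'I_(n + n) :=
  match split j with
  | inl a => lshift n (p a)
  | inr b => rshift n (t b)
  end.

Section BlockEmbed.
Variables (m n : nat) (p t : 'I_m -> 'I_n).
Hypotheses (inj_p : injective p) (inj_t : injective t).
Local Notation e := (block_embed p t).

Definition block_pad : {set 'I_(n + n)} :=
  [set rshift n c | c in [predC codom t]].

Lemma block_embed_lshift a : e (lshift m a) = lshift n (p a).
Proof. by rewrite /block_embed (unsplitK (inl _ a)). Qed.

Lemma block_embed_rshift b : e (rshift m b) = rshift n (t b).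
Proof. by rewrite /block_embed (unsplitK (inr _ b)). Qed.

Lemma block_embed_ltn j : (e j < n)%N = (j < m)%N.
Proof.
case: (split_ordP j) => [a|b] ->.
  by rewrite block_embed_lshift /= !ltn_ord.
rewrite block_embed_rshift /=.
by rewrite !ltnNge !leq_addr.
Qed.

Lemma block_embed_inj : injective e.
Proof.
move=> j1 j2.
case: (split_ordP j1) => [a1|b1] ->; case: (split_ordP j2) => [a2|b2] ->;
  rewrite ?block_embed_lshift ?block_embed_rshift => /eqP;
  rewrite ?eq_lrshift ?eq_rlshift // => /eqP.
  by move=> /lshift_inj /inj_p ->.
by move=> /rshift_inj /inj_t ->.
Qed.

Lemma block_embed_notin_pad j : e j \notin block_pad.
Proof.
apply/imsetP => -[c]; rewrite inE => /negP tc /eqP.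
case: (split_ordP j) => [a|b] ->.
  by rewrite block_embed_lshift eq_lrshift.
rewrite block_embed_rshift.
by move=> /eqP /rshift_inj tbc; apply: tc; rewrite -tbc codom_f.
Qed.

Lemma card_block_pad : #|block_pad| = (n - m)%N.
Proof.
rewrite card_imset; last exact: rshift_inj.
rewrite -[n in RHS]card_ord -[m in RHS]card_ord -(card_codom inj_t).
by rewrite -(cardC [in codom t]) addKn.
Qed.

Lemma block_embed_first (I : {set 'I_(m + m)}) :
  I \subset [set j : 'I_(m + m) | (j < m)%N] ->
  e @: I \subset [set j : 'I_(n + n) | (j < n)%N].
Proof.
move/subsetP=> sI; apply/subsetP => _ /imsetP [j /sI jI ->].
by rewrite !inE block_embed_ltn in jI *.
Qed.

Lemma block_embed_second (J : {set 'I_(m + m)}) :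
  J \subset [set j : 'I_(m + m) | (m <= j)%N] ->
  e @: J :|: block_pad \subset [set j : 'I_(n + n) | (n <= j)%N].
Proof.
move/subsetP=> sJ; apply/subsetP => j' /setUP [].
  case/imsetP => j /sJ jJ ->.
  by rewrite inE leqNgt block_embed_ltn -leqNgt; rewrite inE in jJ.
by case/imsetP => c _ ->; rewrite in_set /= leq_addr.
Qed.

Lemma card_block_embed_pad (J : {set 'I_(m + m)}) :
  #|e @: J :|: block_pad| = (#|J| + (n - m))%N.
Proof.
rewrite cardsU card_imset; last exact: block_embed_inj.
rewrite card_block_pad (_ : _ :&: _ = set0) ?cards0 ?subn0 //.
apply/setP => x; rewrite !inE; apply/andP => -[/imsetP [j _ ->]].
exact/negP/block_embed_notin_pad.
Qed.

End BlockEmbed.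

Lemma row_free_rowsub (F : fieldType) m n (t : 'I_m -> 'I_n) (M : 'M[F]_n) :
  injective t -> M \in unitmx -> row_free (rowsub t M).
Proof.
move=> inj_t M_unit; apply/row_freeP; exists (invmx M *m (rowsub t 1%:M)^T).
rewrite mulmxA mul_rowsub_mx mulmxV // mul_rowsub_mx mul1mx.
by apply/matrixP => i j; rewrite !mxE (inj_eq inj_t) eq_sym.
Qed.

Lemma exists_unit_colsub_rowsub (F : fieldType) m n (t : 'I_m -> 'I_n)
    (M : 'M[F]_n) :
  injective t -> M \in unitmx ->
  exists2 p : 'I_m -> 'I_n, injective p & colsub p (rowsub t M) \in unitmx.
Proof.
move=> inj_t M_unit.
have full_tr : row_full (rowsub t M)^T.
  by rewrite /row_full mxrank_tr; apply: row_free_rowsub.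
exists (fullrankfun full_tr); first exact: fullrankfun_inj.
have := fullrowsub_unit full_tr; rewrite -unitmx_tr.
by congr (_ \in unitmx); apply/matrixP => i j; rewrite !mxE.
Qed.

Section ColumnSubmatrix.
Variables (F : finFieldType) (ti to s n : nat) (M : 'M[F]_n).
Variables (p t : 'I_s -> 'I_n).
Hypotheses (inj_p : injective p) (inj_t : injective t).
Local Notation N := (colsub p (rowsub t M)).
Hypotheses (M_unit : M \in unitmx) (N_unit : N \in unitmx).
Local Notation e := (block_embed p t).

Lemma linear_array_colsub x :
    (forall c, c \notin codom t -> (x *m invmx M) 0 c = 0) ->
  linear_array N (colsub p x) =1 linear_array M x \o e.
Proof.
move=> x0 j; case: (split_ordP j) => [a|b] -> /=.
  by rewrite block_embed_lshift !linear_array_lshift mxE.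
rewrite block_embed_rshift !linear_array_rshift.
have -> : colsub p x = colsub t (x *m invmx M) *m N.
  by rewrite mulmx_colsub mulmx_colsub_rowsub // mulmxKV.
by rewrite mulmxK // mxE.
Qed.

Hypotheses (le_ti_to : (ti <= to)%N) (le_to_s : (to <= s)%N).
Hypothesis aontM : aont ti to (linear_array M).

Lemma linear_array_colsub_unbiased (I J : {set 'I_(s + s)}) :
  I \subset [set j : 'I_(s + s) | (j < s)%N] -> #|I| = ti ->
  J \subset [set j : 'I_(s + s) | (s <= j)%N] -> #|J| = (s - to)%N ->
  unbiased (linear_array N) (I :|: J).
Proof.
move=> sI cI sJ cJ; apply: unbiased_additive (linear_arrayB N) _ => f.
have inj_e := block_embed_inj inj_p inj_t.
pose f' := [ffun j' => if [pick j | e j == j'] is Some j then f j else 0].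
have f'E j : f' (e j) = f j.
  rewrite ffunE; case: pickP => [j1 /eqP /inj_e -> // | /(_ j)].
  by rewrite eqxx.
have f'_pad j' : j' \in block_pad t -> f' j' = 0.
  move=> pad_j'; rewrite ffunE; case: pickP => // j /eqP ej.
  by have := block_embed_notin_pad p t j; rewrite ej pad_j'.
have le_s_n : (s <= n)%N.
  by rewrite -[s]card_ord -[n]card_ord; apply: leq_card inj_t.
have cI' : #|e @: I| = ti by rewrite card_imset.
have cJ' : #|e @: J :|: block_pad t| = (n - to)%N.
  by rewrite card_block_embed_pad // cJ; lia.
(* Zeros on the padding columns force x M^-1 to vanish outside codom t. *)
have [x xf'] : exists x,
    forall j', j' \in e @: I :|: (e @: J :|: block_pad t) ->
    linear_array M x j' = f' j'.
  have F_gt0 : (0 < #|F|)%N by apply/card_gt0P; exists 0.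
  case: aontM => _ _ _ uIJ; apply: unbiased_exists_row => //.
  - rewrite card_mx mul1n leq_pexp2l //.
    by rewrite (leq_trans (leq_card_setU _ _)) // cI' cJ'; lia.
  by apply: uIJ; rewrite ?cI' ?cJ' ?block_embed_first ?block_embed_second.
exists (colsub p x) => j IJj; rewrite linear_array_colsub /=.
  by rewrite xf' ?f'E // setUA -imsetU in_setU imset_f.
move=> c tc; have pad_c : rshift n c \in block_pad t by rewrite imset_f.
by rewrite -linear_array_rshift xf' ?f'_pad // !in_setU pad_c !orbT.
Qed.

Lemma linear_aont_colsub : linear_aont ti to N.
Proof.
split=> //; split.
- by rewrite card_mx mul1n.
- exact: linear_array_unbiased_first.
- exact: linear_array_unbiased_second.
exact: linear_array_colsub_unbiased.
Qed.

End ColumnSubmatrix.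

Lemma linear_aont_shrink (F : finFieldType) ti to s n (M : 'M[F]_n) :
  (ti <= to)%N -> (to <= s)%N -> (s <= n)%N -> linear_aont ti to M ->
  exists N : 'M[F]_s, linear_aont ti to N.
Proof.
move=> le_ti_to le_to_s le_s_n [M_unit aontM].
have inj_t : injective (widen_ord le_s_n).
  by move=> a b /(congr1 val) /= /val_inj.
have [p inj_p N_unit] := exists_unit_colsub_rowsub inj_t M_unit.
by exists (colsub p (rowsub (widen_ord le_s_n) M)); apply: linear_aont_colsub.
Qed.

Lemma aont_card_transfer (R R' X : finType) ti to s (A : R -> 'I_(s + s) -> X) :
  #|R'| = #|R| -> aont ti to A ->
  exists A' : R' -> 'I_(s + s) -> X, aont ti to A'.
Proof.
move=> cardR'; exists (fun r => A (enum_val (cast_ord cardR' (enum_rank r)))).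
apply: aont_reindex => //.
exists (fun r => enum_val (cast_ord (esym cardR') (enum_rank r))) => r.
  by rewrite enum_valK cast_ordK enum_rankK.
by rewrite enum_valK cast_ordKV enum_rankK.
Qed.

Theorem mainTheorem18 (F : finFieldType) (ti to s : nat) :
  (1 <= ti)%N -> (ti <= to)%N -> (to <= s)%N ->
  (exists (s' : nat) (M : 'M[F]_s'), (s <= s')%N /\ linear_aont ti to M) ->
  exists A : 'I_(#|F| ^ s) -> 'I_(s + s) -> F, aont ti to A.
Proof.
move=> _ le_ti_to le_to_s [n [M [le_s_n aontM]]].
have [N [_ aontN]] := linear_aont_shrink le_ti_to le_to_s le_s_n aontM.
by apply: aont_card_transfer aontN; rewrite card_ord card_mx mul1n.
Qed.
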